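(* Let $(E,X,Y)$, with $X=(X_1,\dots,X_d)$, be generated by a structural causal model whose graph is a DAG, whose distribution is faithful (and Markov) with respect to it, and in which $E$ is exogenous. Let $m<d$, define $S^m_{\mathrm{IAS}}:=\bigcup_{S\in\mathcal{MI},\,|S|\le m}S$, and let $m_{\min}$ and $m_{\max}$ be the size of a smallest and of a largest minimally invariant set, respectively. Then: (i) $S^m_{\mathrm{IAS}}\subseteq\mathrm{AN}_Y$; (ii) if $m\ge m_{\max}$, then $S^m_{\mathrm{IAS}}=S_{\mathrm{IAS}}$; (iii) if $m\ge m_{\min}$ and $E\notin\mathrm{PA}_Y$, then $S^m_{\mathrm{IAS}}\in\mathcal{I}$; (iv) if $m\ge m_{\min}$ and $E\notin\mathrm{PA}_Y$, then $S_{\mathrm{ICP}}\subseteq S^m_{\mathrm{IAS}}$, with equality if and only if $S_{\mathrm{ICP}}\in\mathcal{I}$.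
   Context: $\mathrm{PA}_Y$ and $\mathrm{AN}_Y$ are the parents and ancestors of $Y$ in the DAG (indices $j\in[d]$ identified with $X_j$). $S\subseteq[d]$ is invariant if $Y\perp\!\!\!\perp E\mid X_S$; $\mathcal{I}$ is the collection of invariant sets; $S$ is minimally invariant if $S\in\mathcal{I}$ and no proper subset of $S$ is in $\mathcal{I}$; $\mathcal{MI}$ is the collection of minimally invariant sets. $S_{\mathrm{IAS}}=\bigcup_{S\in\mathcal{MI}}S$ and $S_{\mathrm{ICP}}=\bigcap_{S\in\mathcal{I}}S$ (with $S_{\mathrm{ICP}}=\emptyset$ if $\mathcal{I}=\emptyset$; unions over empty collections are $\emptyset$). *)

From mathcomp Require Import all_boot.
Set Implicit Arguments. Unset Strict Implicit. Unset Printing Implicit Defensive.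

(* Nodes of the causal graph over (E, X_1..X_d, Y):
   None = E, Some None = Y, Some (Some j) = X_j. *)
Definition node (d : nat) : finType := option (option 'I_d).
Definition Enode {d} : node d := None.
Definition Ynode {d} : node d := Some None.
Definition Xnode {d} (j : 'I_d) : node d := Some (Some j).

Section Graph.
Variable d : nat.
Notation V := (node d).
Variable g : rel V.  (* g u v  <=>  directed edge u -> v *)

Definition acyclic : Prop := forall u v, g u v -> ~~ connect g v u.
Definition exogenous_E : Prop := forall v, ~~ g v Enode.

Definition adj (u v : V) : bool := g u v || g v u.
Definition collider (u v w : V) : bool := g u v && g w v.

Definition dconnected (Z : {set V}) (a b : V) : Prop :=
  exists p : seq V,
    [/\ path adj a p, last a p = b, uniq (a :: p) &
     forall i, 0 < i < size p ->
       let q := a :: p in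
       let u := nth a q i.-1 in let v := nth a q i in let w := nth a q i.+1 in
       if collider u v w then [exists z in Z, connect g v z] else v \notin Z].

Definition dseparated (Z : {set V}) (a b : V) : Prop := ~ dconnected Z a b.

Definition markov_faithful (indep : V -> V -> {set V} -> bool) : Prop :=
  forall (a b : V) (Z : {set V}), a != b -> a \notin Z -> b \notin Z ->
    (indep a b Z <-> dseparated Z a b).

Definition PA_Y : {set V} := [set v | g v Ynode].
Definition AN_Y : {set 'I_d} := [set j | connect g (Xnode j) Ynode].
End Graph.

Section Invariance.
Variable d : nat.
(* indep a b Z  <=>  a _||_ b | X_Z in the distribution of (E,X,Y) *)
Variable indep : node d -> node d -> {set node d} -> bool.

Definition XS (S : {set 'I_d}) : {set node d} := [set Xnode j | j in S].
Definition invariant (S : {set 'I_d}) : bool := indep Ynode Enode (XS S).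
Definition Icoll : {set {set 'I_d}} := [set S | invariant S].
Definition min_invariant (S : {set 'I_d}) : bool :=
  invariant S && [forall T : {set 'I_d}, (T \proper S) ==> ~~ invariant T].
Definition MIcoll : {set {set 'I_d}} := [set S | min_invariant S].
Definition S_IAS : {set 'I_d} := \bigcup_(S in MIcoll) S.
Definition S_IAS_m (m : nat) : {set 'I_d} := \bigcup_(S in MIcoll | #|S| <= m) S.
Definition S_ICP : {set 'I_d} :=
  if Icoll == set0 then set0 else \bigcap_(S in Icoll) S.
End Invariance.

(* By faithfulness, S is invariant iff X_S d-separates Y from E, and two
   surgeries on d-connecting paths give everything.  On a path from Y to E
   d-connecting given Z, every interior node is an ancestor of Y: following the
   arrows out of a non-collider leads to Y or to a collider, which has a
   descendant in Z, and can never enter the source E.  Hence the intersection of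
   an invariant set with AN_Y is invariant, and minimally invariant sets lie in
   AN_Y.  Second, among subsets of AN_Y invariance is upward closed: a path
   d-connecting given a superset W of Z is rerouted through a directed path to
   Y avoiding Z.  So S^m_IAS, an ancestral set containing a minimally invariant set, is
   invariant.  For S_ICP, use that it lies in every invariant set and that an
   invariant subset of a minimally invariant set is that set. *)

From mathcomp Require Import all_boot.
Set Implicit Arguments. Unset Strict Implicit. Unset Printing Implicit Defensive.

Lemma split_at_last (T : Type) (P : pred T) (x : T) (s : seq T) :
  P x -> exists s1 s2, [/\ s = s1 ++ s2, P (last x s1) & ~~ has P s2].
Proof.
move=> Px; elim/last_ind: s => [|s z [s1 [s2 [-> Ps1 nPs2]]]].
  by exists [::], [::].
have [Pz|nPz] := boolP (P z).
  by exists (rcons (s1 ++ s2) z), [::]; rewrite cats0 last_rcons.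
by exists s1, (rcons s2 z); rewrite rcons_cat has_rcons (negbTE nPz).
Qed.

Section DConnection.
Variables (d : nat) (g : rel (node d)).
Notation V := (node d).

Definition ancestors (a : V) : {set V} := [set v | connect g v a].

Lemma in_ancestors a v : (v \in ancestors a) = connect g v a.
Proof. by rewrite inE. Qed.

Definition active (Z : {set V}) (u v w : V) : bool :=
  if collider g u v w then [exists z in Z, connect g v z] else v \notin Z.

Fixpoint active_from (Z : {set V}) (u : V) (s : seq V) : bool :=
  if s is v :: s' then
    (if s' is w :: _ then active Z u v w else true) && active_from Z v s'
  else true.

Lemma active_fromP Z x0 u s :
  active_from Z u s <->
  (forall i, 0 < i < size s ->
     active Z (nth x0 (u :: s) i.-1) (nth x0 (u :: s) i) (nth x0 (u :: s) i.+1)).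
Proof.
elim: s u => [|v s IH] u /=; first by split=> // _ [].
split.
- case/andP=> hd /IH tl [//|[|i]] /= lt_i; first by move: hd lt_i {IH tl}; case: s.
  exact: (tl i.+1).
- move=> act; apply/andP; split; first by move: act {IH}; case: s => // w s /(_ 1); apply.
  by apply/IH => -[//|i] lt_i; apply: (act i.+2).
Qed.

Lemma dconnectedE Z a b :
  dconnected g Z a b <->
  exists p, [/\ path (adj g) a p, last a p = b, uniq (a :: p) & active_from Z a p].
Proof.
by split=> -[p [pth lst un act]]; exists p; split=> //; apply/(active_fromP _ a).
Qed.

Lemma active_from_catr Z u s1 s2 :
  active_from Z u (s1 ++ s2) -> active_from Z (last u s1) s2.
Proof. by elim: s1 u => //= v s1 IH u /andP[_ /IH]. Qed.

Lemma sub_active_from (P : pred V) Z W u s :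
  (forall u v w, P v -> active W u v w -> active Z u v w) ->
  all P s -> active_from W u s -> active_from Z u s.
Proof.
move=> sub; elim: s u => //= v s IH u /andP[Pv Ps] /andP[act_v act].
rewrite IH // andbT; case: s {IH Ps act} act_v => // w _; exact: sub.
Qed.

Lemma noncollider_out u v w :
  adj g u v -> adj g v w -> ~~ collider g u v w -> g v u || g v w.
Proof.
by rewrite /adj /collider; case: (g u v); case: (g v u); case: (g v w); case: (g w v).
Qed.

Section Ancestral.
Variables (a b : V).
Hypothesis b_source : forall v, ~~ g v b.

Lemma connect_of_desc Z v :
  [exists z in Z :&: ancestors a, connect g v z] -> connect g v a.
Proof.
case/existsP=> z /andP[/setIP[_]]; rewrite in_ancestors => za vz.
exact: connect_trans vz za.
Qed.

Lemma active_setI_ancestors Z u v w :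
  connect g v a -> active (Z :&: ancestors a) u v w -> active Z u v w.
Proof.
rewrite /active => va; case: ifP => _; last by rewrite in_setI in_ancestors va andbT.
by case/existsP=> z /andP[/setIP[zZ _] vz]; apply/existsP; exists z; rewrite zZ.
Qed.

Lemma ancestor_of_forward_edge Z u v s :
  path (adj g) v s -> last v s = b ->
  active_from (Z :&: ancestors a) u (v :: s) -> g u v -> connect g v a.
Proof.
elim: s u v => [|w s IH] u v /=.
  by move=> _ vb _ guv; have := b_source u; rewrite -vb guv.
move=> /andP[vw pth] lst /andP[act_v act] guv.
move: act_v; rewrite /active /collider guv /=; case: ifP => [_|gwv _].
  exact: connect_of_desc.
have gvw : g v w by move: vw; rewrite /adj gwv orbF.
exact: connect_trans (connect1 gvw) (IH v w pth lst act gvw).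
Qed.

Lemma active_from_setI_ancestors Z u s :
  path (adj g) u s -> last u s = b ->
  (g (head u s) u -> connect g (head u s) a) ->
  active_from (Z :&: ancestors a) u s -> active_from Z u s.
Proof.
elim: s u => //= v [//|w s] IH u /andP[uv pth] lst back /andP[act_v act].
have va : connect g v a.
  move: act_v; rewrite /active; case: ifP => [_|ncoll _]; first exact: connect_of_desc.
  have /andP[vw pth_w] := pth.
  have /orP[gvu|gvw] := noncollider_out uv vw (negbT ncoll); first exact: back.
  exact: connect_trans (connect1 gvw) (ancestor_of_forward_edge pth_w lst act gvw).
rewrite (active_setI_ancestors va act_v) /=.
by apply: IH => // gwv; exact: connect_trans (connect1 gwv) va.
Qed.

Lemma dconnected_setI_ancestors Z :
  dconnected g (Z :&: ancestors a) a b -> dconnected g Z a b.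
Proof.
case/dconnectedE=> p [pth lst un act]; apply/dconnectedE; exists p; split=> //.
by apply: active_from_setI_ancestors pth lst _ act => /connect1.
Qed.

End Ancestral.

Section Monotone.
Hypothesis g_acyclic : acyclic g.

Lemma acyclic_asym u v : g u v -> ~~ g v u.
Proof. by move=> guv; apply/negP=> gvu; have := g_acyclic guv; rewrite connect1. Qed.

(* [connect (anc_step Z) a v]: some directed path from v to a avoids Z. *)
Definition anc_step (Z : {set V}) : rel V :=
  fun u v : V => [&& g v u, u \notin Z & v \notin Z].

Lemma notin_of_no_desc (Z : {set V}) v : ~~ [exists z in Z, connect g v z] -> v \notin Z.
Proof. by apply: contra => vZ; apply/existsP; exists v; rewrite vZ connect0. Qed.

Lemma connect_anc_step (Z : {set V}) a v :
  connect g v a -> ~~ [exists z in Z, connect g v z] -> connect (anc_step Z) a v.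
Proof.
case/connectP=> s; elim: s v => [|w s IH] v /=; first by move=> _ ->.
case/andP=> gvw pth lst no_desc_v.
have no_desc_w : ~~ [exists z in Z, connect g w z].
  apply: contra no_desc_v => /existsP[z /andP[zZ wz]].
  by apply/existsP; exists z; rewrite zZ (connect_trans (connect1 gvw) wz).
apply: connect_trans (IH w pth lst no_desc_w) (connect1 _).
by rewrite /anc_step gvw !notin_of_no_desc.
Qed.

Lemma active_anc_step Z u v w : anc_step Z u v -> active Z u v w.
Proof.
by case/and3P=> gvu _ vZ; rewrite /active /collider (negbTE (acyclic_asym gvu)).
Qed.

Lemma active_from_anc_step_cat Z u D s :
  path (anc_step Z) u D -> active_from Z (last u D) s -> active_from Z u (D ++ s).
Proof.
elim: D u => //= v D IH u /andP[uv pD] act; rewrite (IH v pD act) andbT.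
by case: (D ++ s) => // w _; exact: active_anc_step.
Qed.

Lemma dconnected_subset_ancestors (Z W : {set V}) a b :
  Z \subset W -> W \subset ancestors a ->
  dconnected g W a b -> dconnected g Z a b.
Proof.
(* Keep the path after its last node x with [connect (anc_step Z) a x], and
   replace the part before x by such a directed path. *)
move=> sZW sWA /dconnectedE[p [pth lst un act]].
pose R := [pred v | connect (anc_step Z) a v].
have [p1 [p2 [def_p Rx notR_p2]]] := @split_at_last _ R a p (connect0 _ a).
have [D [pD lD uD]] :
    exists D, [/\ path (anc_step Z) a D, last a D = last a p1 & uniq (a :: D)].
  by case/connectP: Rx => s ps ->; case: (shortenP ps) => D; exists D.
have W_to_Z u v w : ~~ R v -> active W u v w -> active Z u v w.
  move=> notRv; rewrite /active; case: ifP => _; last exact/contra/subsetP.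
  case/existsP=> z /andP[zW vz]; apply: contraNT notRv; apply: connect_anc_step.
  by have := subsetP sWA z zW; rewrite in_ancestors; exact: connect_trans.
move: pth lst un act; rewrite def_p cat_path last_cat -cat_cons cat_uniq.
case/andP=> _ pth2 lst /and3P[_ _ un2] /active_from_catr act2.
apply/dconnectedE; exists (D ++ p2); split.
- rewrite cat_path lD pth2 andbT; apply: sub_path pD => u v /and3P[gvu _ _].
  by rewrite /adj gvu orbT.
- by rewrite last_cat lD.
- rewrite -cat_cons cat_uniq uD un2 andbT; apply/hasPn => v p2v.
  apply: contra (hasPn notR_p2 v p2v); exact: path_connect pD v.
- apply: active_from_anc_step_cat pD _; rewrite lD.
  by apply: (sub_active_from (P := predC R) W_to_Z) act2; rewrite all_predC.
Qed.

End Monotone.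
End DConnection.

Section Invariance.
Variables (d : nat) (g : rel (node d)).
Variable indep : node d -> node d -> {set node d} -> bool.
Hypothesis g_acyclic : acyclic g.
Hypothesis E_exogenous : exogenous_E g.
Hypothesis indep_faithful : markov_faithful g indep.

Lemma XS_setI_AN_Y (S : {set 'I_d}) :
  XS (S :&: AN_Y g) = XS S :&: ancestors g Ynode.
Proof.
have in_AN_Y j : (j \in AN_Y g) = connect g (Xnode j) Ynode by rewrite inE.
apply/setP=> v; rewrite inE; apply/imsetP/andP=> [[j] | [/imsetP[j jS ->]]].
  by rewrite inE in_AN_Y => /andP[jS jA] ->; rewrite in_ancestors imset_f.
by rewrite in_ancestors => jA; exists j; rewrite // inE in_AN_Y jS.
Qed.

Lemma invariantE (S : {set 'I_d}) :
  invariant indep S <-> dseparated g (XS S) Ynode Enode.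
Proof. by apply: indep_faithful => //; apply/imsetP => -[]. Qed.

Lemma invariant_setI_AN_Y (S : {set 'I_d}) :
  invariant indep S -> invariant indep (S :&: AN_Y g).
Proof.
move/invariantE=> sep; apply/invariantE; rewrite XS_setI_AN_Y => con.
exact/sep/(dconnected_setI_ancestors E_exogenous).
Qed.

Lemma invariant_superset (S T : {set 'I_d}) :
  S \subset T -> T \subset AN_Y g -> invariant indep S -> invariant indep T.
Proof.
move=> sST sTA /invariantE sep; apply/invariantE => con; apply: sep.
apply: (dconnected_subset_ancestors g_acyclic (W := XS T)) con; first exact: imsetS.
by rewrite -(setIidPl sTA) XS_setI_AN_Y subsetIr.
Qed.

Lemma MIcoll_invariant (S : {set 'I_d}) : S \in MIcoll indep -> invariant indep S.
Proof. by rewrite inE => /andP[]. Qed.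

Lemma min_invariant_eq (S T : {set 'I_d}) :
  S \in MIcoll indep -> T \subset S -> invariant indep T -> T = S.
Proof.
rewrite inE => /andP[_ /forallP/(_ T)] minS sTS iT.
by apply/eqP; rewrite eqEsubset sTS; move: minS; rewrite properE sTS iT implybF negbK.
Qed.

Lemma MIcoll_sub_AN_Y (S : {set 'I_d}) : S \in MIcoll indep -> S \subset AN_Y g.
Proof.
move=> SM; have iSA := invariant_setI_AN_Y (MIcoll_invariant SM).
by rewrite -(min_invariant_eq SM (subsetIl _ _) iSA) subsetIr.
Qed.

Lemma S_IAS_m_sub_AN_Y m : S_IAS_m indep m \subset AN_Y g.
Proof. by apply/bigcupsP => S /andP[SM _]; exact: MIcoll_sub_AN_Y. Qed.

Lemma sub_S_IAS_m m (S : {set 'I_d}) :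
  S \in MIcoll indep -> #|S| <= m -> S \subset S_IAS_m indep m.
Proof. by move=> SM Sm; apply: (bigcup_sup S); rewrite SM. Qed.

Lemma S_IAS_m_invariant m (S : {set 'I_d}) :
  S \in MIcoll indep -> #|S| <= m -> S_IAS_m indep m \in Icoll indep.
Proof.
move=> SM Sm; rewrite inE.
exact: invariant_superset (sub_S_IAS_m SM Sm) (S_IAS_m_sub_AN_Y m) (MIcoll_invariant SM).
Qed.

Lemma S_IAS_m_eq_S_IAS m :
  (forall S, S \in MIcoll indep -> #|S| <= m) -> S_IAS_m indep m = S_IAS indep.
Proof.
by move=> small; apply: eq_bigl => S; case SM: (S \in MIcoll indep); rewrite //= small.
Qed.

Lemma S_ICP_sub_invariant (S : {set 'I_d}) : invariant indep S -> S_ICP indep \subset S.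
Proof.
move=> iS; have SI : S \in Icoll indep by rewrite inE.
rewrite /S_ICP; case: ifP => [/eqP I0|_]; last exact: bigcap_inf.
by rewrite I0 inE in SI.
Qed.

Lemma S_ICP_sub_S_IAS_m m (S : {set 'I_d}) :
  S \in MIcoll indep -> #|S| <= m -> S_ICP indep \subset S_IAS_m indep m.
Proof.
move=> SM Sm.
exact: subset_trans (S_ICP_sub_invariant (MIcoll_invariant SM)) (sub_S_IAS_m SM Sm).
Qed.

Lemma S_ICP_eq_S_IAS_m m (S : {set 'I_d}) :
  S \in MIcoll indep -> #|S| <= m ->
  S_ICP indep = S_IAS_m indep m <-> S_ICP indep \in Icoll indep.
Proof.
move=> SM Sm; split=> [-> | CI]; first exact: S_IAS_m_invariant SM Sm.
apply/eqP; rewrite eqEsubset (S_ICP_sub_S_IAS_m SM Sm).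
apply/bigcupsP => T /andP[TM _].
rewrite inE in CI.
by rewrite (min_invariant_eq TM (S_ICP_sub_invariant (MIcoll_invariant TM))).
Qed.

End Invariance.

Theorem proposition5 (d : nat) (g : rel (node d))
    (indep : node d -> node d -> {set node d} -> bool) (m : nat) :
  acyclic g -> exogenous_E g -> markov_faithful g indep -> m < d ->
  [/\ (* (i) *) S_IAS_m indep m \subset AN_Y g,
      (* (ii) m >= m_max *)
      ((forall S, S \in MIcoll indep -> #|S| <= m) ->
         S_IAS_m indep m = S_IAS indep),
      (* (iii) m >= m_min, E notin PA_Y *)
      ((exists2 S, S \in MIcoll indep & #|S| <= m) -> Enode \notin PA_Y g ->
         S_IAS_m indep m \in Icoll indep) &
      (* (iv) *)
      ((exists2 S, S \in MIcoll indep & #|S| <= m) -> Enode \notin PA_Y g ->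
         S_ICP indep \subset S_IAS_m indep m /\
         (S_ICP indep = S_IAS_m indep m <-> S_ICP indep \in Icoll indep))].
Proof.
move=> acyc exo faithful _; split.
- exact: (S_IAS_m_sub_AN_Y exo faithful).
- exact: S_IAS_m_eq_S_IAS.
- by case=> S SM Sm _; exact: (S_IAS_m_invariant acyc exo faithful SM Sm).
- case=> S SM Sm _; split; first exact: S_ICP_sub_S_IAS_m SM Sm.
  exact: (S_ICP_eq_S_IAS_m acyc exo faithful SM Sm).
Qed.
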